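(* Let $S$ be a set of patterns and $f_n$ the number of rooted labeled forests on $[n]$ avoiding $S$. Then $\lim_{n\to\infty}\frac{f_n^{1/n}}{n}=0$ if and only if $S$ contains the pattern $12\cdots k$ and the pattern $\ell(\ell-1)\cdots 1$ for some positive integers $k$ and $\ell$.
   Context: A rooted labeled forest on $[n]$ is an unordered forest on $n$ vertices, each component with a distinguished root, with distinct labels from $[n]$. A pattern of length $k$ is a permutation of $[k]$; an instance of it is a sequence of vertices $v_1,\dots,v_k$ with $v_i$ a strict ancestor of $v_{i+1}$ whose labels are in the same relative order as the pattern; a forest avoids $S$ if it contains no instance of any pattern in $S$. *)

From HB Require Import structures.
From mathcomp Require Import all_boot all_order all_algebra fingroup perm.
From mathcomp Require Import boolp classical_sets reals topology normedtype sequences exp.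
Set Implicit Arguments. Unset Strict Implicit. Unset Printing Implicit Defensive.

(* A rooted labeled forest on [n] (vertices = labels 'I_n, i.e. {0..n-1},
   order-isomorphic to [n]) is given by its parent map: parent v = None iff v is
   a root. *)
Definition parent_map (n : nat) := {ffun 'I_n -> option 'I_n}.

Definition up (n : nat) (F : parent_map n) (k : nat) (v : 'I_n) : option 'I_n :=
  iter k (fun o => obind F o) (Some v).

Definition is_forest (n : nat) (F : parent_map n) : Prop :=
  forall v : 'I_n, exists k, up F k v = None.

Definition strict_ancestor (n : nat) (F : parent_map n) (u w : 'I_n) : Prop :=
  exists k, 0 < k /\ up F k w = Some u.

Definition instance_of (n k : nat) (F : parent_map n) (p : {perm 'I_k})
  (v : 'I_k -> 'I_n) : Prop :=
  (forall i : 'I_k, forall Hi : i.+1 < k,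
      strict_ancestor F (v i) (v (Ordinal Hi))) /\
  (forall i j : 'I_k, (v i < v j) = (p i < p j)).

Definition contains (n k : nat) (F : parent_map n) (p : {perm 'I_k}) : Prop :=
  exists v, instance_of F p v.

Definition pattern_set := forall k : nat, {perm 'I_k} -> Prop.

Definition avoids (n : nat) (F : parent_map n) (S : pattern_set) : Prop :=
  forall k (p : {perm 'I_k}), S k p -> ~ contains F p.

Definition f_count (S : pattern_set) (n : nat) : nat :=
  #|[set F : parent_map n | `[< is_forest F /\ avoids F S >]]|.

Definition increasing_pattern (k : nat) : {perm 'I_k} := 1%g.
Definition decreasing_pattern (k : nat) : {perm 'I_k} := perm (@rev_ord_inj k).

From HB Require Import structures.
From mathcomp Require Import all_boot all_order all_algebra fingroup perm.
From mathcomp Require Import boolp classical_sets reals topology normedtype sequences exp.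
From mathcomp Require Import zify lra.
Import Order.TTheory GRing.Theory Num.Theory numFieldNormedType.Exports.

(* If S contains 12...k and l...1, an S-avoiding forest has no ancestor chain
   with increasing labels of length k and none with decreasing labels of length
   l.  Ranking each vertex by the longest increasing and the longest decreasing
   chain ending at it (Erdos-Szekeres) then shows that every vertex has fewer
   than (k-1)(l-1) strict ancestors.  Such a forest is determined by its
   depth labelling together with, for each vertex of depth i > 0, a parent among
   the m_(i-1) vertices of depth i-1, so f_n <= sum over labellings of
   prod_i (1 + m_(i-1))^(m_i).  Bounding a^b <= (t n)^b e^(a/t) layer by layer,
   with scales satisfying t_i e^(1/t_(i+1)) = eps, makes every such product at
   most C (eps n)^n, whence f_n^(1/n)/n -> 0.
   Conversely, if S has no increasing pattern then the n! forests in which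
   every parent has a smaller label than its children avoid S, since all their
   chains are increasing (symmetrically for decreasing patterns), and
   n! >= (n/e)^n keeps f_n^(1/n)/n above 1/e. *)

Set Implicit Arguments. Unset Strict Implicit. Unset Printing Implicit Defensive.

Lemma card_option_if (T : finType) (b : bool) (P : pred T) :
  #|(fun o : option T => if o is Some u then P u else b)| = b + #|P|.
Proof.
rewrite (cardD1 None) -(card_image (@Some_inj _) P); congr (_ + _).
apply: eq_card => -[u|]; rewrite !inE /=; first by rewrite (fintype.mem_image Some_inj).
by apply/esym/negbTE/mapP => -[].
Qed.

Lemma card_family_prod (aT rT : finType) (D : aT -> pred rT) :
  #|family D| = \prod_x #|D x|.
Proof. by rewrite card_family foldrE big_map big_enum. Qed.

Lemma card_bigcup_le (I T : finType) (A : I -> {set T}) :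
  #|\bigcup_i A i| <= \sum_i #|A i|.
Proof.
elim/big_rec2: _ => [|i B m _ le_Bm]; first by rewrite cards0.
by apply: leq_trans (leq_card_setU _ _) _; rewrite leq_add2l.
Qed.

Lemma card_perm_lt n (p : {perm 'I_n}) v : #|[pred u | p u < p v]| = p v.
Proof.
have lt_pv_n : p v <= n by apply: ltnW.
have widen_inj : injective (widen_ord lt_pv_n) by move=> a b /(congr1 val) /= /val_inj.
rewrite -[RHS]card_ord -(card_imset _ widen_inj).
rewrite -(card_preimset _ (@perm_inj _ p)); apply: eq_card => u; rewrite !inE.
apply/idP/imsetP => [lt_u|[w _ /(congr1 val) /= ->]] //.
by exists (Ordinal lt_u); last exact: val_inj.
Qed.

Section ParentMap.
Variables (n : nat) (F : parent_map n).

Lemma iter_obind_None k : iter k (fun o => obind F o) None = None.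
Proof. by elim: k => //= k ->. Qed.

Lemma upS k v : up F k.+1 v = obind F (up F k v).
Proof. by []. Qed.

Lemma upSr k v : up F k.+1 v = if F v is Some u then up F k u else None.
Proof. by rewrite /up iterSr /=; case: (F v) => //; apply: iter_obind_None. Qed.

Lemma up_add i j v u : up F i v = Some u -> up F (i + j) v = up F j u.
Proof. by move=> up_i; rewrite /up addnC iterD -/(up F i v) up_i. Qed.

Lemma up_None_le i j v : up F i v = None -> i <= j -> up F j v = None.
Proof. by move=> up_i /subnK <-; rewrite /up iterD -/(up F i v) up_i iter_obind_None. Qed.

Lemma strict_ancestor_trans u w x :
  strict_ancestor F u w -> strict_ancestor F w x -> strict_ancestor F u x.
Proof.
move=> [i [i_gt0 up_i]] [j [j_gt0 up_j]]; exists (j + i).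
by rewrite addn_gt0 i_gt0 orbT (up_add _ up_j).
Qed.

Lemma forest_up_self v j : is_forest F -> up F j v = Some v -> j = 0.
Proof.
move=> forest cycle; apply/eqP; apply: contraT; rewrite -lt0n => j_gt0.
have up_mul m : up F (j * m) v = Some v.
  by elim: m => [|m IH]; rewrite ?muln0 // mulnS (up_add _ cycle).
have [m up_m] := forest v.
by have := up_None_le up_m (leq_pmull m j_gt0); rewrite up_mul.
Qed.

Lemma forest_up_lt v i j a b : is_forest F -> i < j ->
  up F i v = Some a -> up F j v = Some b -> strict_ancestor F b a /\ b != a.
Proof.
move=> forest lt_ij up_i up_j.
have up_ab : up F (j - i) a = Some b by rewrite -(up_add _ up_i) subnKC // ltnW.
split; first by exists (j - i); rewrite subn_gt0.
apply/eqP => eq_ba; move: up_ab; rewrite eq_ba => /(forest_up_self forest) /eqP.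
by rewrite subn_eq0 leqNgt lt_ij.
Qed.

Lemma instance_strict_ancestor k (p : {perm 'I_k}) w : instance_of F p w ->
  forall i j : 'I_k, i < j -> strict_ancestor F (w i) (w j).
Proof.
case: k p w => [p w _ []//|k p w [step _]].
have homo : {in gtn k.+1 &, {homo (fun m => w (inord m)) : a b / a < b >->
                                  strict_ancestor F a b}}.
  apply: homo_ltn_in => [a b c|a b _ lt_b c /andP[_ lt_cb]|a _ lt_a].
  - exact: strict_ancestor_trans.
  - exact: ltn_trans lt_cb lt_b.
  have a_lt : a < k.+1 := ltnW lt_a.
  have lt_a' : (@inord k a).+1 < k.+1 by rewrite inordK.
  rewrite (_ : inord a.+1 = Ordinal lt_a'); first exact: step.
  by apply: val_inj; rewrite /= !inordK.
by move=> i j lt_ij; have := homo i j (ltn_ord i) (ltn_ord j) lt_ij; rewrite !inord_val.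
Qed.

End ParentMap.

Section ChainRank.
Variables (T : finType) (e : rel T) (M : nat).
Hypothesis no_path_of_size : forall x s, path e x s -> size s != M.

Definition ends_path (v : T) (m : nat) : Prop :=
  exists x s, [/\ path e x s, last x s = v & size s = m].

Definition chain_rank (v : T) : nat := \max_(m < M | `[< ends_path v m >]) m.

Lemma chain_rank_witness v : exists2 m : 'I_M, chain_rank v = m & ends_path v m.
Proof.
have M_gt0 : 0 < M by rewrite lt0n eq_sym (@no_path_of_size v [::]).
have [|m ends_m max_m] := @eq_bigmax_cond _ (fun m : 'I_M => `[< ends_path v m >]) val.
  by apply/card_gt0P; exists (Ordinal M_gt0); apply/asboolP; exists v, [::].
by exists m; [rewrite -max_m | apply/asboolP].
Qed.

Lemma chain_rank_lt v : chain_rank v < M.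
Proof. by have [m ->] := chain_rank_witness v. Qed.

Lemma chain_rank_lt_step u v : e u v -> chain_rank u < chain_rank v.
Proof.
move=> e_uv; have [m rank_u [x [s [path_s last_s size_s]]]] := chain_rank_witness u.
have path_sv : path e x (rcons s v) by rewrite rcons_path path_s last_s.
have lt_m1 : m.+1 < M.
  rewrite ltn_neqAle ltn_ord andbT; have := no_path_of_size path_sv.
  by rewrite size_rcons size_s.
rewrite rank_u; apply: (leq_bigmax_cond (Ordinal lt_m1)); apply/asboolP.
by exists x, (rcons s v); rewrite last_rcons size_rcons size_s.
Qed.

End ChainRank.

Lemma lt_increasing_pattern k (i j : 'I_k) :
  (increasing_pattern k i < increasing_pattern k j) = (i < j).
Proof. by rewrite !perm1. Qed.

Lemma lt_decreasing_pattern k (i j : 'I_k) :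
  (decreasing_pattern k i < decreasing_pattern k j) = (j < i).
Proof. by rewrite !permE /=; have := ltn_ord i; have := ltn_ord j; lia. Qed.

Lemma eq_perm_lt k (p q : {perm 'I_k}) :
  (forall i j, (p i < p j) = (q i < q j)) -> p = q.
Proof.
move=> same_order; apply/permP => i; apply: ord_inj.
rewrite -card_perm_lt -[RHS]card_perm_lt.
by apply: eq_card => j; rewrite !inE same_order.
Qed.

Section AncestorChains.
Variables (n : nat) (F : parent_map n).

(* With [ρ = 1] these are the chains of increasing labels, with the reversal
   [ρ = decreasing_pattern n] those of decreasing labels. *)
Definition ancestor_chain (ρ : {perm 'I_n}) : rel 'I_n :=
  fun a b => `[< strict_ancestor F a b >] && (ρ a < ρ b).

Lemma ancestor_chain_instance ρ x s : path (ancestor_chain ρ) x s ->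
  exists w : 'I_(size s).+1 -> 'I_n,
    (forall (i : 'I_(size s).+1) (Hi : i.+1 < (size s).+1),
        strict_ancestor F (w i) (w (Ordinal Hi))) /\
    (forall i j, (ρ (w i) < ρ (w j)) = (i < j)).
Proof.
move=> chain; exists (fun i => nth x (x :: s) i); split.
  by move=> i Hi; case/andP: (pathP x chain i Hi) => /asboolP.
have sorted_ρ : sorted ltn [seq val (ρ y) | y <- x :: s].
  have chain_ρ : path (relpre (fun y => val (ρ y)) ltn) x s.
    by apply: sub_path chain => a b /andP[].
  by rewrite -path_map in chain_ρ.
move=> i j; have := lt_sorted_ltn_nth 0 sorted_ρ.
rewrite size_map => /(_ i j (ltn_ord i) (ltn_ord j)).
by rewrite !(nth_map x) ?ltn_ord.
Qed.

Lemma ancestor_chain_increasing x s :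
  path (ancestor_chain 1) x s -> contains F (increasing_pattern (size s).+1).
Proof.
case/ancestor_chain_instance => w [anc mono]; exists w; split=> // i j.
by rewrite lt_increasing_pattern -mono !perm1.
Qed.

Lemma ancestor_chain_decreasing x s : path (ancestor_chain (decreasing_pattern n)) x s ->
  contains F (decreasing_pattern (size s).+1).
Proof.
case/ancestor_chain_instance => w [anc mono]; exists w; split=> // i j.
by rewrite lt_decreasing_pattern -mono lt_decreasing_pattern.
Qed.

Section HeightBound.
Variables (K L : nat).
Hypothesis noI : ~ contains F (increasing_pattern K.+1).
Hypothesis noD : ~ contains F (decreasing_pattern L.+1).

Lemma increasing_chain_size_neq x s : path (ancestor_chain 1) x s -> size s != K.
Proof. by move=> /ancestor_chain_increasing I; apply/eqP => size_s; rewrite size_s in I. Qed.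

Lemma decreasing_chain_size_neq x s :
  path (ancestor_chain (decreasing_pattern n)) x s -> size s != L.
Proof. by move=> /ancestor_chain_decreasing D; apply/eqP => size_s; rewrite size_s in D. Qed.

Definition chain_ranks (a : 'I_n) : 'I_K * 'I_L :=
  (Ordinal (chain_rank_lt increasing_chain_size_neq a),
   Ordinal (chain_rank_lt decreasing_chain_size_neq a)).

(* Erdos-Szekeres: of two distinct comparable vertices, the lower one ends a
   longer increasing or a longer decreasing chain. *)
Lemma chain_ranks_neq a b :
  strict_ancestor F b a -> b != a -> chain_ranks b != chain_ranks a.
Proof.
move=> anc_ba neq_ba; have anc : `[< strict_ancestor F b a >] by apply/asboolP.
case: (ltngtP b a) => [lt_ba|lt_ab|/val_inj eq_ba]; last by rewrite eq_ba eqxx in neq_ba.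
  have := chain_rank_lt_step increasing_chain_size_neq (_ : ancestor_chain 1 b a).
  rewrite /ancestor_chain !perm1 anc lt_ba => /(_ isT) lt_rank.
  by apply/eqP => /(congr1 (val \o fst)) /= eq_rank; rewrite eq_rank ltnn in lt_rank.
have := chain_rank_lt_step decreasing_chain_size_neq (_ : ancestor_chain _ b a).
rewrite /ancestor_chain lt_decreasing_pattern anc lt_ab => /(_ isT) lt_rank.
by apply/eqP => /(congr1 (val \o snd)) /= eq_rank; rewrite eq_rank ltnn in lt_rank.
Qed.

Lemma forest_height_le : is_forest F -> forall v, up F (K * L) v = None.
Proof.
move=> forest v; case up_KL: (up F (K * L) v) => [?|] //; exfalso.
pose anc (j : 'I_(K * L).+1) := odflt v (up F j v).
have up_anc (j : 'I_(K * L).+1) : up F j v = Some (anc j).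
  rewrite /anc; case up_j: (up F j v) => [a|] //.
  by rewrite (up_None_le up_j (ltn_ord j)) in up_KL.
have ranks_neq (i j : 'I_(K * L).+1) :
    i < j -> chain_ranks (anc i) != chain_ranks (anc j).
  move=> lt_ij; have [anc_ji neq_ji] := forest_up_lt forest lt_ij (up_anc i) (up_anc j).
  by rewrite eq_sym chain_ranks_neq.
suff /leq_card : injective (chain_ranks \o anc) by rewrite card_prod !card_ord ltnn.
move=> i j /= eq_ij.
by case: (ltngtP i j) => [/ranks_neq|/ranks_neq|/val_inj //]; rewrite eq_ij eqxx.
Qed.

End HeightBound.

End AncestorChains.

Section RankedForests.
Variables (n : nat) (ρ : {perm 'I_n}).

Definition ranked (F : parent_map n) : Prop := forall v u, F v = Some u -> ρ u < ρ v.

Variable F : parent_map n.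
Hypothesis F_ranked : ranked F.

Lemma ranked_up j v : up F j v = None \/ exists2 u, up F j v = Some u & ρ u + j <= ρ v.
Proof.
elim: j => [|j [up_j|[u up_j le_u]]]; first by right; exists v; rewrite ?addn0.
  by left; rewrite upS up_j.
rewrite upS up_j /=; case F_u: (F u) => [w|]; [right | by left].
by exists w => //; have := F_ranked F_u; lia.
Qed.

Lemma ranked_forest : is_forest F.
Proof. by move=> v; exists (ρ v).+1; case: (ranked_up (ρ v).+1 v) => // -[u _]; lia. Qed.

Lemma ranked_strict_ancestor u w : strict_ancestor F u w -> ρ u < ρ w.
Proof.
move=> [j [j_gt0 up_j]]; case: (ranked_up j w) => [|[u' up_j']]; first by rewrite up_j.
by move: up_j'; rewrite up_j => -[<-]; lia.
Qed.

Lemma ranked_instance k (p : {perm 'I_k}) w : instance_of F p w ->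
  forall i j, (ρ (w i) < ρ (w j)) = (i < j).
Proof.
move=> inst i j.
have lt_rank (a b : 'I_k) : a < b -> ρ (w a) < ρ (w b).
  by move=> /(instance_strict_ancestor inst) /ranked_strict_ancestor.
case: (ltngtP i j) => [/lt_rank //|/lt_rank /ltnW /leq_gtF //|/val_inj ->].
exact: ltnn.
Qed.

End RankedForests.

Lemma fact_le_card_ranked n (ρ : {perm 'I_n}) :
  n`! <= #|[set F : parent_map n | `[< ranked ρ F >]]|.
Proof.
pose D v : pred (option 'I_n) := fun o => if o is Some u then ρ u < ρ v else true.
apply: (@leq_trans #|family D|).
  rewrite card_family_prod (eq_bigr (fun v => (ρ v).+1)) => [|v _]; last first.
    by rewrite card_option_if card_perm_lt.
  rewrite (reindex_inj (@perm_inj _ ρ^-1)) (eq_bigr (fun v : 'I_n => v.+1)) => [|v _].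
    by rewrite fact_prod big_add1 big_mkord.
  by rewrite permKV.
apply/subset_leq_card/fintype.subsetP => F /familyP F_D.
by rewrite inE; apply/asboolP => v u F_v; move: (F_D v); rewrite unfold_in /D F_v.
Qed.

Lemma fact_le_f_count_increasing S n :
  (forall k, ~ S k (increasing_pattern k)) -> n`! <= f_count S n.
Proof.
move=> noI; apply: leq_trans (fact_le_card_ranked 1) _.
apply/subset_leq_card/fintype.subsetP => F.
rewrite !inE => F_ranked; split; first exact: ranked_forest F_ranked.
move=> k p S_p [w inst]; apply: (noI k); suff <- : p = increasing_pattern k by [].
apply: eq_perm_lt => i j; have [_ <-] := inst.
by rewrite lt_increasing_pattern -(ranked_instance F_ranked inst) !perm1.
Qed.

Lemma fact_le_f_count_decreasing S n :
  (forall k, ~ S k (decreasing_pattern k)) -> n`! <= f_count S n.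
Proof.
move=> noD; apply: leq_trans (fact_le_card_ranked (decreasing_pattern n)) _.
apply/subset_leq_card/fintype.subsetP => F.
rewrite !inE => F_ranked; split; first exact: ranked_forest F_ranked.
move=> k p S_p [w inst]; apply: (noD k); suff <- : p = decreasing_pattern k by [].
apply: eq_perm_lt => i j; have [_ <-] := inst.
by rewrite lt_decreasing_pattern -(ranked_instance F_ranked inst) lt_decreasing_pattern.
Qed.

Section Depth.
Variables (n : nat) (F : parent_map n).

(* Depth computed with fuel [k]: exact once the ancestor line of [v] ends
   within [k] steps. *)
Fixpoint depth (k : nat) (v : 'I_n) : nat :=
  if k is k'.+1 then (if F v is Some u then (depth k' u).+1 else 0) else 0.

Lemma depthS k v : depth k.+1 v = if F v is Some u then (depth k u).+1 else 0.
Proof. by []. Qed.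

Lemma depth_lt k v : depth k v < k.+1.
Proof. by elim: k v => //= k IH v; case: (F v). Qed.

Lemma depth_root k v : F v = None -> depth k v = 0.
Proof. by case: k => //= k ->. Qed.

Lemma depth_fuelS k v : up F k v = None -> depth k.+1 v = depth k v.
Proof.
elim: k v => [v|k IH v]; first by rewrite /up.
by rewrite upSr !depthS; case: (F v) => // u /IH ->.
Qed.

Lemma depth_child k v u : up F k v = None -> F v = Some u -> depth k v = (depth k u).+1.
Proof.
case: k => [|k]; first by rewrite /up.
by rewrite upSr depthS => + F_v; rewrite F_v => /depth_fuelS ->.
Qed.

End Depth.

Definition parent_candidates n H (δ : 'I_n -> 'I_H.+1) (v : 'I_n) : pred (option 'I_n) :=
  fun o => if o is Some u then (δ u).+1 == δ v else δ v == 0 :> nat.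

Lemma height_le_family n H (F : parent_map n) : (forall v, up F H v = None) ->
  F \in family (parent_candidates [ffun v => inord (depth F H v) : 'I_H.+1]).
Proof.
move=> height_le; apply/familyP => v; rewrite unfold_in /parent_candidates.
case F_v: (F v) => [u|]; rewrite !ffunE !inordK ?depth_lt //.
  by rewrite (depth_child (height_le v) F_v).
by rewrite depth_root.
Qed.

Lemma card_height_le n H :
  #|[set F : parent_map n | `[< forall v, up F H v = None >]]| <=
  \sum_(δ : {ffun 'I_n -> 'I_H.+1}) \prod_v (1 + #|[pred u | (δ u).+1 == δ v]|).
Proof.
pose candidates (δ : {ffun 'I_n -> 'I_H.+1}) : {set parent_map n} :=
  [set F in family (parent_candidates δ)].
apply: (@leq_trans #|\bigcup_δ candidates δ|).
  apply/subset_leq_card/fintype.subsetP => F; rewrite inE => /asboolP height_le.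
  by apply/bigcupP; exists [ffun v => inord (depth F H v)]; last rewrite inE height_le_family.
apply: leq_trans (card_bigcup_le _) _; apply: leq_sum => δ _.
rewrite cardsE card_family_prod; apply: leq_prod => v _.
by rewrite card_option_if leq_add2r leq_b1.
Qed.

Lemma f_count_le_layers S k l n :
  S k.+1 (increasing_pattern k.+1) -> S l.+1 (decreasing_pattern l.+1) ->
  f_count S n <= \sum_(δ : {ffun 'I_n -> 'I_(k * l).+1})
                   \prod_v (1 + #|[pred u | (δ u).+1 == δ v]|).
Proof.
move=> S_inc S_dec; apply: leq_trans (card_height_le n (k * l)).
apply/subset_leq_card/fintype.subsetP => F; rewrite !inE => -[forest avoid].
apply/asboolP; exact: forest_height_le (avoid _ _ S_inc) (avoid _ _ S_dec) forest.
Qed.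

Local Open Scope ring_scope.

Lemma prod_fibers (R : comPzRingType) n H (δ : 'I_n -> 'I_H.+1) (f : 'I_H.+1 -> R) :
  \prod_v f (δ v) = \prod_i f i ^+ #|[pred u | δ u == i]|.
Proof.
rewrite (partition_big δ xpredT) //=; apply: eq_bigr => i _.
rewrite (eq_bigr (fun _ => f i)) => [|v /eqP -> //].
by rewrite -prodr_const; apply: eq_bigl => v; rewrite inE.
Qed.

Section LayerProducts.
Variable R : realType.

Lemma expr_le_scaled_expR (a t : R) (b m : nat) : 0 <= a -> 0 < t -> (b <= m)%N ->
  a ^+ b <= (t * m%:R) ^+ b * expR (a / t).
Proof.
move=> a_ge0 t_gt0; case: b => [_|b le_bm].
  by rewrite !expr0 mul1r -expR0 ler_expR divr_ge0 // ltW.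
have tb_gt0 : 0 < t * b.+1%:R by rewrite mulr_gt0.
have a_tb_ge0 : 0 <= a / (t * b.+1%:R) by rewrite divr_ge0 // ltW.
have a_eq : a = t * b.+1%:R * (a / (t * b.+1%:R)) by rewrite mulrC divfK ?gt_eqF.
rewrite {1}a_eq exprMn.
have tm_ge0 : 0 <= t * m%:R by rewrite mulr_ge0 ?ler0n // ltW.
apply: ler_pM; [exact: exprn_ge0 (ltW tb_gt0) | exact: exprn_ge0 | |].
  by rewrite lerXn2r ?nnegrE ?(ltW tb_gt0) // ler_wpM2l ?ler_nat // ltW.
have -> : a / t = a / (t * b.+1%:R) * b.+1%:R by rewrite invfM mulrA divfK ?pnatr_eq0.
rewrite expRM_natr lerXn2r ?nnegrE ?expR_ge0 //.
by apply: le_trans (expR_ge1Dx _); rewrite lerDr.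
Qed.

Fixpoint layer_scale (ε : R) (j : nat) : R :=
  if j is j'.+1 then ε * expR (- (layer_scale ε j')^-1) else ε.

Lemma layer_scale_gt0 ε j : 0 < ε -> 0 < layer_scale ε j.
Proof. by move=> ε_gt0; elim: j => //= j _; rewrite mulr_gt0 // expR_gt0. Qed.

Lemma sum_card_succ_le n H (δ : 'I_n -> 'I_H.+1) (g : nat -> R) : (forall i, 0 <= g i) ->
  \sum_(i < H.+1) #|[pred u | (δ u).+1 == i]|%:R * g i <= \sum_u g (δ u).+1.
Proof.
move=> g_ge0.
have card_sum (i : nat) : #|[pred u | (δ u).+1 == i]|%:R = \sum_u ((δ u).+1 == i)%:R :> R.
  by rewrite -sum1_card natr_sum big_mkcond; apply: eq_bigr => u _; rewrite inE; case: eqP.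
under eq_bigr do rewrite card_sum mulr_suml.
rewrite exchange_big; apply: ler_sum => u _.
rewrite (eq_bigr (fun i : 'I_H.+1 => if i == (δ u).+1 :> nat then g i else 0)) => [|i _].
  by rewrite -big_mkcond big_ord1_eq; case: ifP.
by rewrite eq_sym; case: eqP; rewrite ?mul1r ?mul0r.
Qed.

Lemma prod_layers_le H (ε : R) : 0 < ε -> exists C : R, forall n (δ : 'I_n -> 'I_H.+1),
  ((\prod_v (1 + #|[pred u | (δ u).+1 == δ v]|))%N%:R : R) <= C * (ε * n%:R) ^+ n.
Proof.
move=> ε_gt0; pose t i := layer_scale ε (H.+1 - i).
have t_gt0 i : 0 < t i by apply: layer_scale_gt0.
(* The scales telescope: each vertex of layer i contributes t_i n e^(1 / t_(i+1)) = ε n. *)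
have t_step i : (i <= H)%N -> t i * expR (t i.+1)^-1 = ε.
  by move=> le_iH; rewrite /t subSS subSn //= -mulrA -expRD addNr expR0 mulr1.
exists (expR (\sum_(i < H.+1) (t i)^-1)) => n δ.
pose below (i : nat) := #|[pred u | (δ u).+1 == i]|.
rewrite natr_prod (eq_bigr (fun v => (1 + below (δ v))%N%:R)) //.
rewrite (prod_fibers δ (fun i => (1 + below i)%N%:R)).
apply: (@le_trans _ _ (\prod_(i < H.+1) ((t i * n%:R) ^+ #|[pred u | δ u == i]|
                                         * expR ((1 + below i)%N%:R / t i)))).
  apply: ler_prod => i _; rewrite exprn_ge0 ?ler0n //=.
  by apply: expr_le_scaled_expR; rewrite ?ler0n // -[n in (_ <= n)%N]card_ord max_card.
rewrite big_split /= -expR_sum -(prod_fibers δ (fun i => t i * n%:R)).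
have sum_le : \sum_(i < H.+1) (1 + below i)%N%:R / t i <=
              \sum_(i < H.+1) (t i)^-1 + \sum_v (t (δ v).+1)^-1.
  under eq_bigr do rewrite natrD mulrDl mul1r.
  rewrite big_split /= lerD2l; apply: (@sum_card_succ_le _ _ δ (fun i => (t i)^-1)) => i.
  by rewrite invr_ge0 ltW.
apply: (@le_trans _ _ ((\prod_v (t (δ v) * n%:R)) *
    expR (\sum_(i < H.+1) (t i)^-1 + \sum_v (t (δ v).+1)^-1))).
  by rewrite ler_wpM2l ?ler_expR // prodr_ge0 // => v _; rewrite mulr_ge0 ?ler0n // ltW.
rewrite expRD mulrCA ler_pM2l ?expR_gt0 // expR_sum -big_split /=.
rewrite (eq_bigr (fun _ => ε * n%:R)) ?prodr_const ?card_ord // => v _.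
by rewrite mulrAC t_step // -ltnS.
Qed.

End LayerProducts.

Lemma f_count_le_pow (R : realType) S k l (ε : R) : 0 < ε ->
  S k.+1 (increasing_pattern k.+1) -> S l.+1 (decreasing_pattern l.+1) ->
  exists C : R, forall n, (f_count S n)%:R <= C * (ε * n%:R) ^+ n.
Proof.
move=> ε_gt0 S_inc S_dec; set H := (k * l)%N.
have [C le_C] := prod_layers_le H (divr_gt0 ε_gt0 (ltr0Sn R H)).
exists C => n; have le_sum := f_count_le_layers n S_inc S_dec.
rewrite -(ler_nat R) natr_sum in le_sum; apply: le_trans le_sum _.
apply: le_trans (_ : _ <= \sum_(δ : {ffun 'I_n -> 'I_H.+1}) C * (ε / H.+1%:R * n%:R) ^+ n) _.
  by apply: ler_sum => δ _; apply: le_C.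
rewrite sumr_const card_ffun !card_ord -[_ *+ (H.+1 ^ n)%N]mulr_natr natrX -mulrA -exprMn.
by rewrite mulrAC divfK ?pnatr_eq0.
Qed.

Local Open Scope classical_set_scope.

Section RootGrowth.
Variable R : realType.

Lemma powR_exprK (x : R) n : 0 <= x -> (0 < n)%N -> (x ^+ n) `^ n%:R^-1 = x.
Proof.
move=> x_ge0 n_gt0.
by rewrite -powR_mulrn // -powRrM mulfV ?pnatr_eq0 -?lt0n // powRr1.
Qed.

Lemma powR_inv_le (x a : R) n : (0 < n)%N -> 0 <= x -> 0 <= a ->
  x <= a ^+ n -> x `^ n%:R^-1 <= a.
Proof.
move=> n_gt0 x_ge0 a_ge0 le_xa; rewrite -[leRHS](powR_exprK a_ge0 n_gt0).
by apply: ge0_ler_powR; rewrite ?nnegrE ?invr_ge0 ?exprn_ge0.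
Qed.

Lemma powR_inv_ge (x a : R) n : (0 < n)%N -> 0 <= a ->
  a ^+ n <= x -> a <= x `^ n%:R^-1.
Proof.
move=> n_gt0 a_ge0 le_ax; rewrite -[leLHS](powR_exprK a_ge0 n_gt0).
by apply: ge0_ler_powR; rewrite ?nnegrE ?invr_ge0 ?exprn_ge0 // (le_trans _ le_ax) ?exprn_ge0.
Qed.

Lemma pow_div_expR_le_fact n : (n%:R / expR 1) ^+ n <= n`!%:R :> R.
Proof.
case: n => [|m]; first by rewrite expr0.
rewrite expr_div_n -expRM_natr mul1r ler_pdivrMr ?expR_gt0 // mulrC.
rewrite -ler_pdivrMr ?ltr0n ?fact_gt0 //.
by apply: le_trans (expR_ge1Dxn m (ler0n _ _)); rewrite lerDr.
Qed.

Lemma root_div_cvg0 (f : nat -> nat) :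
  (forall ε : R, 0 < ε -> exists C : R, forall n, (f n)%:R <= C * (ε * n%:R) ^+ n) ->
  (fun n => ((f n)%:R `^ n%:R^-1 / n%:R : R)) @ \oo --> (0 : R).
Proof.
move=> le_pow; apply/cvgrPdist_lt => η η_gt0.
have [C le_C] := le_pow (η / 4) (divr_gt0 η_gt0 (ltr0Sn _ 3)).
near=> n.
have n_gt0 : (0 < n)%N by near: n; exact: nbhs_infty_ge.
have le_Cn : C <= n%:R by near: n; exact: nbhs_infty_ger.
have n_pos : (0 : R) < n%:R by rewrite ltr0n.
(* C <= n < 2 ^ n absorbs the constant into the base of the power *)
have le_f : (f n)%:R <= (η / 2 * n%:R) ^+ n.
  apply: le_trans (le_C n) _.
  have -> : η / 2 = 2 * (η / 4) by lra.
  rewrite -mulrA [leRHS]exprMn; apply: ler_wpM2r.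
    by rewrite exprn_ge0 // mulr_ge0 ?ler0n // divr_ge0 // ltW.
  by apply: le_trans le_Cn _; rewrite -natrX ler_nat ltnW // ltn_expl.
rewrite sub0r normrN ger0_norm ?divr_ge0 ?powR_ge0 ?ler0n // ltr_pdivrMr //.
apply: le_lt_trans (powR_inv_le n_gt0 (ler0n _ _) _ le_f) _.
  by rewrite mulr_ge0 ?ler0n // divr_ge0 // ltW.
by rewrite ltr_pM2r //; lra.
Unshelve. all: end_near.
Qed.

Lemma root_div_not_cvg0 (f : nat -> nat) : (forall n, n`! <= f n)%N ->
  ~ ((fun n => ((f n)%:R `^ n%:R^-1 / n%:R : R)) @ \oo --> (0 : R)).
Proof.
move=> fact_le cvg0.
suff : (expR 1)^-1 <= lim ((fun n => ((f n)%:R `^ n%:R^-1 / n%:R : R)) @ \oo).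
  by rewrite (cvg_lim _ cvg0) // leNgt invr_gt0 expR_gt0.
apply: limr_ge; first exact: cvgP cvg0.
near=> n.
have n_gt0 : (0 < n)%N by near: n; exact: nbhs_infty_ge.
rewrite ler_pdivlMr ?ltr0n // mulrC powR_inv_ge ?divr_ge0 ?expR_ge0 ?ler0n //.
by apply: le_trans (pow_div_expR_le_fact n) _; rewrite ler_nat.
Unshelve. all: end_near.
Qed.

End RootGrowth.

Unset Implicit Arguments.
Theorem proposition5p9 (R : realType) (S : pattern_set)
  (HS : forall k (p : {perm 'I_k}), S k p -> (0 < k)%N) :
  ((fun n : nat => ((f_count S n)%:R `^ (n%:R^-1) / n%:R : R)) @ \oo --> (0 : R))
  <-> (exists k l : nat, [/\ (0 < k)%N, (0 < l)%N,
         S k (increasing_pattern k) & S l (decreasing_pattern l)]).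
Proof.
split=> [cvg0|[k [l [k_gt0 l_gt0 S_inc S_dec]]]]; last first.
  case: k k_gt0 S_inc => // k _ S_inc; case: l l_gt0 S_dec => // l _ S_dec.
  by apply: root_div_cvg0 => ε ε_gt0; apply: f_count_le_pow S_inc S_dec.
have [[k S_inc]|noI] := pselect (exists k, S k (increasing_pattern k)); last first.
  exfalso; apply: (root_div_not_cvg0 _ cvg0) => n.
  by apply: fact_le_f_count_increasing => k S_k; apply: noI; exists k.
have [[l S_dec]|noD] := pselect (exists l, S l (decreasing_pattern l)); last first.
  exfalso; apply: (root_div_not_cvg0 _ cvg0) => n.
  by apply: fact_le_f_count_decreasing => l S_l; apply: noD; exists l.
by exists k, l; split; [exact: HS S_inc | exact: HS S_dec | |].
Qed.
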